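(* Let $d=d_\ell+d_s$ and write $w\in\mathbb{R}^d$ as $w=(u,s)$ with $u\in\mathbb{R}^{d_\ell}$, $s\in\mathbb{R}^{d_s}$. Let $\mathcal{W}\subset\mathbb{R}^d$ be a closed convex set with finite diameter $D:=\sup_{w,w'\in\mathcal{W}}\|w-w'\|_2<\infty$. Let $\lambda_p,\lambda_s\ge 0$, and for $t=1,\dots,T$ let $f_t:\mathbb{R}^d\to\mathbb{R}$ be convex and $c_t\in\mathbb{R}^{d_\ell}$, and define \[ F_t(w)=f_t(w)+\lambda_p\|s\|_1+\frac{\lambda_s}{2}\|u-c_t\|_2^2 . \] Let $\eta>0$, $w_0\in\mathcal{W}$, and for $t=1,\dots,T$ let \[ w_t\in\arg\min_{w\in\mathcal{W}}\Big\{F_t(w)+\frac{1}{2\eta}\|w-w_{t-1}\|_2^2\Big\}. \] Then for any comparator sequence $\{v_t\}_{t=1}^T\subset\mathcal{W}$, with path length $V_T(\{v_t\}):=\sum_{t=2}^T\|v_t-v_{t-1}\|_2$, \[ \sum_{t=1}^{T}\big(F_t(w_t)-F_t(v_t)\big)\;\le\;\frac{1}{2\eta}\|v_1-w_0\|_2^2+\frac{D}{\eta}\,V_T(\{v_t\}). \] In particular, if $w_t^\star\in\arg\min_{w\in\mathcal{W}}F_t(w)$ for each $t$ and $V_T^\star:=\sum_{t=2}^T\|w_t^\star-w_{t-1}^\star\|_2$, then \[ \sum_{t=1}^{T}\big(F_t(w_t)-F_t(w_t^\star)\big)\;\le\;\frac{1}{2\eta}\|w_1^\star-w_0\|_2^2+\frac{D}{\eta}\,V_T^\star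 . \]
   Context: $\|\cdot\|_2$ is the Euclidean norm and $\|\cdot\|_1$ the $\ell_1$ norm. (The comparator points are denoted $u_t$ in the paper; they are renamed $v_t$ here to avoid a clash with the block $u$ of $w$.) *)

From HB Require Import structures.
From mathcomp Require Import all_boot all_order all_algebra.
From mathcomp Require Import all_classical all_reals all_analysis.
Set Implicit Arguments. Unset Strict Implicit. Unset Printing Implicit Defensive.
Import Order.TTheory GRing.Theory Num.Theory.
Import numFieldNormedType.Exports.
Local Open Scope classical_set_scope.
Local Open Scope ring_scope.

Section Defs.
Variable R : realType.

Definition norm2 n (x : 'rV[R]_n) : R := Num.sqrt (\sum_(i < n) x 0 i ^+ 2).
Definition norm1 n (x : 'rV[R]_n) : R := \sum_(i < n) `|x 0 i|.

Definition ublock dl ds (w : 'rV[R]_(dl + ds)) : 'rV[R]_dl := lsubmx w.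
Definition sblock dl ds (w : 'rV[R]_(dl + ds)) : 'rV[R]_ds := rsubmx w.

Definition convex_fun n (f : 'rV[R]_n -> R) : Prop :=
  forall x y (a : R), 0 <= a <= 1 ->
    f (a *: x + (1 - a) *: y) <= a * f x + (1 - a) * f y.

Definition dists n (W : set 'rV[R]_n) : set R :=
  [set r | exists x y, W x /\ W y /\ r = norm2 (x - y)].
Definition diam n (W : set 'rV[R]_n) : R := sup (dists W).

Definition is_argmin n (W : set 'rV[R]_n) (G : 'rV[R]_n -> R) (w : 'rV[R]_n) : Prop :=
  W w /\ forall w', W w' -> G w <= G w'.

Definition Fobj dl ds (lp ls : R) (f : 'rV[R]_(dl + ds) -> R) (c : 'rV[R]_dl)
  (w : 'rV[R]_(dl + ds)) : R :=
  f w + lp * norm1 (sblock w) + ls / 2 * norm2 (ublock w - c) ^+ 2.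

Definition path_length n (T : nat) (v : nat -> 'rV[R]_n) : R :=
  \sum_(2 <= t < T.+1) norm2 (v t - v t.-1).

End Defs.

From HB Require Import structures.
From mathcomp Require Import all_boot all_order all_algebra.
From mathcomp Require Import all_classical all_reals all_analysis.
From mathcomp Require Import ring lra.
Set Implicit Arguments. Unset Strict Implicit. Unset Printing Implicit Defensive.
Import Order.TTheory GRing.Theory Num.Theory.
Import numFieldNormedType.Exports.
Local Open Scope classical_set_scope.
Local Open Scope ring_scope.

(** Since [F_t] is convex (the l1 and squared Euclidean regularisers
    are), the proximal objective [F_t + |. - w_(t-1)|^2 / (2 eta)] is strongly
    convex, and its minimiser [w_t] over the convex set [W] satisfies the
    three-point inequality
      [F_t w_t - F_t v <= (|v - w_(t-1)|^2 - |v - w_t|^2) / (2 eta)]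
    for every [v] in [W].  Summing with [v = v_t], the right-hand sides
    telescope up to the drift terms [|v_(t+1) - w_t|^2 - |v_t - w_t|^2], which
    are at most [2 D |v_(t+1) - v_t|] because all these points lie in [W]. *)

Lemma le0_small_multiples (R : realFieldType) (x k : R) :
  0 <= k -> (forall a, 0 < a <= 1 -> x <= a * k) -> x <= 0.
Proof.
move=> k0 xle; apply/ler_addgt0Pr => e e0; rewrite add0r.
have k1 : 0 < k + 1 by rewrite ltr_wpDl.
pose a := Num.min 1 (e / (k + 1)).
have a0 : 0 < a by rewrite lt_min ltr01 divr_gt0.
apply: (le_trans (xle a _)); first by rewrite a0 ge_min lexx.
apply: (@le_trans _ _ (e / (k + 1) * k)); first by rewrite ler_wpM2r // ge_min lexx orbT.
by rewrite mulrAC ler_pdivrMr // ler_wpM2l ?(ltW e0) // lerDl.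
Qed.

Lemma sum_le_telescope (R : realDomainType) (a b c e : nat -> R) (T : nat) :
  0 <= b 1%N -> (forall t, 0 <= c t) ->
  (forall t, (1 <= t <= T)%N -> a t <= b t - c t) ->
  (forall t, (1 <= t < T)%N -> b t.+1 - c t <= e t.+1) ->
  \sum_(1 <= t < T.+1) a t <= b 1%N + \sum_(2 <= t < T.+1) e t.
Proof.
move=> b1_ge0 c_ge0 abc bce.
have partial m : (1 <= m <= T)%N ->
    \sum_(1 <= t < m.+1) a t + c m <= b 1%N + \sum_(2 <= t < m.+1) e t.
  elim: m => [//|[|m] IH] /andP[_ mT].
    by rewrite big_nat1 big_geq // addr0; have := abc 1%N mT; lra.
  rewrite big_nat_recr //= [X in _ <= _ + X]big_nat_recr //=.
  have := IH (ltnW mT); have := abc m.+2 mT; have := bce m.+1 mT; lra.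
case: T abc bce partial => [|T] _ _ partial; first by rewrite !big_geq // addr0.
by have := partial T.+1 (leqnn _); have := c_ge0 T.+1; lra.
Qed.

Section Euclidean.
Variables (R : realType) (n : nat).
Implicit Types (x y z p : 'rV[R]_n) (a D : R).

Definition dotr x y : R := \sum_(i < n) x 0 i * y 0 i.

Lemma norm2_ge0 x : 0 <= norm2 x.
Proof. exact: sqrtr_ge0. Qed.

Lemma norm2_sqr x : norm2 x ^+ 2 = \sum_(i < n) x 0 i ^+ 2.
Proof. by rewrite sqr_sqrtr // sumr_ge0 // => i _; rewrite sqr_ge0. Qed.

Lemma norm2_sqrBZ x z a :
  norm2 (x - a *: z) ^+ 2 = norm2 x ^+ 2 - 2 * a * dotr x z + a ^+ 2 * norm2 z ^+ 2.
Proof.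
rewrite !norm2_sqr /dotr !mulr_sumr -sumrB -big_split /=.
by apply: eq_bigr => i _; rewrite !mxE; ring.
Qed.

Lemma norm2_sqr_conv x y p a :
  norm2 (a *: x + (1 - a) *: y - p) ^+ 2 =
  a * norm2 (x - p) ^+ 2 + (1 - a) * norm2 (y - p) ^+ 2
  - a * (1 - a) * norm2 (x - y) ^+ 2.
Proof.
rewrite !norm2_sqr !mulr_sumr -!big_split -sumrB /=.
by apply: eq_bigr => i _; rewrite !mxE; ring.
Qed.

Lemma dotr_sqr_le x z : dotr x z ^+ 2 <= norm2 x ^+ 2 * norm2 z ^+ 2.
Proof.
have [z0|z_neq0] := eqVneq (norm2 z) 0.
  have zi0 i : z 0 i = 0.
    apply/eqP; rewrite -sqrf_eq0; apply/eqP; move: i isT.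
    apply: psumr_eq0P => [i _|]; first exact: sqr_ge0.
    by rewrite -norm2_sqr z0 expr0n.
  by rewrite z0 expr0n mulr0 /dotr big1 ?expr0n // => i _; rewrite zi0 mulr0.
have z_gt0 : 0 < norm2 z ^+ 2 by rewrite exprn_gt0 // lt_def z_neq0 norm2_ge0.
have := sqr_ge0 (norm2 (x - (dotr x z / norm2 z ^+ 2) *: z)).
rewrite norm2_sqrBZ.
have -> : norm2 x ^+ 2 - 2 * (dotr x z / norm2 z ^+ 2) * dotr x z
          + (dotr x z / norm2 z ^+ 2) ^+ 2 * norm2 z ^+ 2
        = (norm2 x ^+ 2 * norm2 z ^+ 2 - dotr x z ^+ 2) / norm2 z ^+ 2 by field.
by rewrite pmulr_lge0 ?invr_gt0 // subr_ge0.
Qed.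

Lemma dotr_le_norm2 x z : dotr x z <= norm2 x * norm2 z.
Proof.
apply: le_trans (ler_norm _) _.
rewrite -ler_sqr ?nnegrE ?mulr_ge0 ?norm2_ge0 // real_normK ?num_real // exprMn.
exact: dotr_sqr_le.
Qed.

Lemma subr_norm2_sqr_le x y D : norm2 x <= D -> norm2 y <= D ->
  norm2 x ^+ 2 - norm2 y ^+ 2 <= 2 * D * norm2 (x - y).
Proof.
move=> xD yD.
have -> : norm2 x ^+ 2 - norm2 y ^+ 2 = dotr x (x - y) + dotr y (x - y).
  rewrite !norm2_sqr /dotr -sumrB -big_split /=.
  by apply: eq_bigr => i _; rewrite !mxE; ring.
have := dotr_le_norm2 x (x - y); have := dotr_le_norm2 y (x - y).
have := norm2_ge0 (x - y); have := norm2_ge0 x; have := norm2_ge0 y.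
nra.
Qed.

End Euclidean.

Lemma norm2_le_diam (R : realType) n (W : set 'rV[R]_n) (x y : 'rV[R]_n) :
  has_ubound (dists W) -> W x -> W y -> norm2 (x - y) <= diam W.
Proof.
move=> W_bdd Wx Wy; apply: sup_upper_bound; last by exists x, y.
by split=> //; exists (norm2 (x - y)), x, y.
Qed.

Section Convexity.
Variable R : realType.

Lemma convex_funD n (f g : 'rV[R]_n -> R) :
  convex_fun f -> convex_fun g -> convex_fun (fun x => f x + g x).
Proof.
move=> cf cg x y a a01.
have := cf x y a a01; have := cg x y a a01; lra.
Qed.

Lemma convex_funZ n (k : R) (f : 'rV[R]_n -> R) :
  0 <= k -> convex_fun f -> convex_fun (fun x => k * f x).
Proof.
move=> k0 cf x y a a01.
by rewrite mulrCA [_ * (k * _)]mulrCA -mulrDr ler_wpM2l // cf.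
Qed.

Lemma convex_fun_comp_linear m n (L : {linear 'rV[R]_m -> 'rV[R]_n})
    (f : 'rV[R]_n -> R) :
  convex_fun f -> convex_fun (f \o L).
Proof. by move=> cf x y a a01; rewrite /= linearD !linearZ cf. Qed.

Lemma convex_norm1 n : convex_fun (@norm1 R n).
Proof.
move=> x y a /andP[a0 a1]; rewrite /norm1 !mulr_sumr -big_split /=.
apply: ler_sum => i _; rewrite !mxE.
apply: le_trans (ler_normD _ _) _.
by rewrite !normrM (ger0_norm a0) (@ger0_norm _ (1 - a)) ?subr_ge0.
Qed.

Lemma convex_norm2_sqrB n (c : 'rV[R]_n) : convex_fun (fun x => norm2 (x - c) ^+ 2).
Proof.
move=> x y a /andP[a0 a1]; rewrite norm2_sqr_conv gerBl.
by rewrite mulr_ge0 ?sqr_ge0 // mulr_ge0 ?subr_ge0.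
Qed.

Lemma Fobj_convex dl ds (lp ls : R) (f : 'rV[R]_(dl + ds) -> R) (c : 'rV[R]_dl) :
  0 <= lp -> 0 <= ls -> convex_fun f -> convex_fun (Fobj lp ls f c).
Proof.
move=> lp0 ls0 cf; apply: convex_funD; first apply: convex_funD => //.
  exact: convex_funZ lp0 (convex_fun_comp_linear (@rsubmx R 1 dl ds) (@convex_norm1 ds)).
apply/convex_funZ; first by rewrite divr_ge0.
exact: (convex_fun_comp_linear (@lsubmx R 1 dl ds) (convex_norm2_sqrB c)).
Qed.

End Convexity.

Lemma convex_set_comb (R : realType) n (W : set 'rV[R]_n) x y (a : R) :
  convex_set W -> W x -> W y -> 0 <= a <= 1 -> W (a *: x + (1 - a) *: y).
Proof.
move=> cW Wx Wy /andP[a0 a1].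
have a01 : Itv.spec (@Itv.num_sem R) (Itv.Real `[0%Z, 1%Z]) a.
  by rewrite /= /Itv.num_sem /= in_itv /= a0 a1 ger0_real.
by have := cW x y (Itv.mk a01); rewrite !inE; apply.
Qed.

Lemma prox_step_le (R : realType) n (W : set 'rV[R]_n) (F : 'rV[R]_n -> R)
    (q : R) (p w v : 'rV[R]_n) :
  convex_set W -> convex_fun F -> 0 < q -> W v ->
  is_argmin W (fun x => F x + q * norm2 (x - p) ^+ 2) w ->
  F w - F v <= q * norm2 (v - p) ^+ 2 - q * norm2 (v - w) ^+ 2.
Proof.
move=> cW cF q0 Wv [Ww w_min].
(* Compare [w] with the points [a v + (1 - a) w] of the segment [[w, v]]: the
   proximal term leaves a gap [a (1 - a) q |v - w|^2], and letting [a -> 0]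
   recovers the whole [q |v - w|^2]. *)
set K := q * norm2 (v - w) ^+ 2.
set X := F w + q * norm2 (w - p) ^+ 2 - F v - q * norm2 (v - p) ^+ 2 + K.
suff : X <= 0.
  have := mulr_ge0 (ltW q0) (sqr_ge0 (norm2 (w - p))).
  rewrite /X; lra.
apply: (le0_small_multiples (mulr_ge0 (ltW q0) (sqr_ge0 (norm2 (v - w))))).
move=> a /andP[a0 a1].
have a01 : 0 <= a <= 1 by rewrite (ltW a0) a1.
have := w_min _ (convex_set_comb cW Wv Ww a01); rewrite /=.
have := cF v w a a01.
rewrite norm2_sqr_conv => F_conv w_le.
have : a * (X - a * K) <= 0 by rewrite /X /K; nra.
by rewrite (pmulr_rle0 _ a0) subr_le0.
Qed.

Lemma prox_dynamic_regret (R : realType) n (W : set 'rV[R]_n) (eta : R) (T : nat)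
    (F : nat -> 'rV[R]_n -> R) (w v : nat -> 'rV[R]_n) :
  convex_set W -> has_ubound (dists W) -> 0 < eta ->
  (forall t, (1 <= t <= T)%N -> convex_fun (F t)) ->
  (forall t, (1 <= t <= T)%N ->
     is_argmin W (fun x => F t x + 1 / (2 * eta) * norm2 (x - w t.-1) ^+ 2) (w t)) ->
  (forall t, (1 <= t <= T)%N -> W (v t)) ->
  \sum_(1 <= t < T.+1) (F t (w t) - F t (v t))
    <= 1 / (2 * eta) * norm2 (v 1%N - w 0%N) ^+ 2 + diam W / eta * path_length T v.
Proof.
move=> cW W_bdd eta_gt0 F_cvx w_prox v_in.
set q := 1 / (2 * eta).
have q_gt0 : 0 < q by rewrite divr_gt0 ?mulr_gt0.
rewrite /path_length mulr_sumr.
apply: (sum_le_telescope (b := fun t => q * norm2 (v t - w t.-1) ^+ 2)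
                         (c := fun t => q * norm2 (v t - w t) ^+ 2)).
- exact: mulr_ge0 (ltW q_gt0) (sqr_ge0 _).
- by move=> t; apply: mulr_ge0 (ltW q_gt0) (sqr_ge0 _).
- by move=> t tT; apply: prox_step_le cW (F_cvx t tT) q_gt0 (v_in t tT) (w_prox t tT).
move=> t /andP[t_ge1 tT] /=.
have t_in : (1 <= t <= T)%N by rewrite t_ge1 ltnW.
have t1_in : (1 <= t.+1 <= T)%N by rewrite tT.
have Wwt := (w_prox t t_in).1.
have drift := subr_norm2_sqr_le (norm2_le_diam W_bdd (v_in _ t1_in) Wwt)
                                (norm2_le_diam W_bdd (v_in _ t_in) Wwt).
rewrite opprB addrA subrK in drift.
have -> : diam W / eta = q * (2 * diam W) by rewrite /q; field; rewrite lt0r_neq0.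
have := ler_wpM2l (ltW q_gt0) drift; lra.
Qed.

Theorem theoremC2 (R : realType) (dl ds : nat) (W : set 'rV[R]_(dl + ds))
  (lp ls eta : R) (T : nat)
  (f : nat -> 'rV[R]_(dl + ds) -> R) (c : nat -> 'rV[R]_dl)
  (w : nat -> 'rV[R]_(dl + ds)) :
  closed W -> convex_set W -> has_ubound (dists W) ->
  0 <= lp -> 0 <= ls ->
  (forall t, (1 <= t <= T)%N -> convex_fun (f t)) ->
  0 < eta -> W (w 0%N) ->
  (forall t, (1 <= t <= T)%N ->
     is_argmin W (fun x => Fobj lp ls (f t) (c t) x
                           + 1 / (2 * eta) * norm2 (x - w t.-1) ^+ 2) (w t)) ->
  (forall v : nat -> 'rV[R]_(dl + ds),
     (forall t, (1 <= t <= T)%N -> W (v t)) ->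
     \sum_(1 <= t < T.+1) (Fobj lp ls (f t) (c t) (w t) - Fobj lp ls (f t) (c t) (v t))
     <= 1 / (2 * eta) * norm2 (v 1%N - w 0%N) ^+ 2
        + diam W / eta * path_length T v)
  /\
  (forall wstar : nat -> 'rV[R]_(dl + ds),
     (forall t, (1 <= t <= T)%N -> is_argmin W (Fobj lp ls (f t) (c t)) (wstar t)) ->
     \sum_(1 <= t < T.+1) (Fobj lp ls (f t) (c t) (w t) - Fobj lp ls (f t) (c t) (wstar t))
     <= 1 / (2 * eta) * norm2 (wstar 1%N - w 0%N) ^+ 2
        + diam W / eta * path_length T wstar).
Proof.
(* Closedness of [W] and [W (w 0)] only serve the existence of the iterates,
   which is assumed. *)
move=> _ cW W_bdd lp_ge0 ls_ge0 f_cvx eta_gt0 _ w_prox.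
have regret v := prox_dynamic_regret (v := v) cW W_bdd eta_gt0
  (fun t tT => Fobj_convex (c t) lp_ge0 ls_ge0 (f_cvx t tT)) w_prox.
split=> [//|wstar wstar_min].
by apply: regret => t /wstar_min[].
Qed.
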